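(* Suppose $n$ is even and $T\in SO(n)$. Suppose the minimal polynomial of $T$ is a power of an irreducible quadratic polynomial over $\mathbb R$. Then $T$ is real in $SO(n)$ if and only if $n\not\equiv 2\pmod 4$.
   Context: An element $g$ of a group $G$ is real in $G$ if there is $h\in G$ with $hgh^{-1}=g^{-1}$. *)

From mathcomp Require Import all_boot all_order all_algebra.
From mathcomp Require Import reals.
Set Implicit Arguments. Unset Strict Implicit. Unset Printing Implicit Defensive.
Import Order.TTheory GRing.Theory Num.Theory.
Local Open Scope ring_scope.

Definition in_SO (R : realType) (n : nat) (A : 'M[R]_n) : Prop :=
  A *m A^T = 1%:M /\ \det A = 1.

Definition real_in_SO (R : realType) (n : nat) (g : 'M[R]_n) : Prop :=
  exists h : 'M[R]_n, in_SO h /\ h *m g *m invmx h = invmx g.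

From mathcomp Require Import all_boot all_order all_algebra.
From mathcomp Require Import reals.
From mathcomp Require Import complex ring lra zify.
Set Implicit Arguments. Unset Strict Implicit. Unset Printing Implicit Defensive.
Import Order.TTheory GRing.Theory Num.Theory.
Local Open Scope ring_scope.

(** An orthogonal T is normal, so q(T) is a normal nilpotent matrix, hence
    zero, and q = X^2 + bX + c is the minimal polynomial of T. Multiplying
    q(T) = 0 by T^-1 = T^T and comparing with the transpose gives
    (1 - c)(T - T^T) = 0; a symmetric orthogonal T would be a root of X^2 - 1,
    so c = 1, and irreducibility gives q = X^2 - 2gX + 1 with g^2 < 1. Thus
    T = g + sJ with s > 0 and J a complex structure (J^T = -J, J^2 = -1),
    and T^-1 = g - sJ. So T is real in SO(n) iff some h in SO(n)
    conjugates J to -J. In an orthonormal basis adapted to J, J is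
    multiplication by i on C^m (n = 2m); an h anticommuting with it is complex
    conjugation (determinant (-1)^m) composed with a C-linear map (determinant
    |det_C|^2 >= 0), so such an h of determinant 1 exists iff m is even. *)

Lemma orthogonal_invmx (F : comUnitRingType) n (A : 'M[F]_n) :
  A *m A^T = 1%:M -> invmx A = A^T.
Proof.
move=> AAt; have [A_unit _] := mulmx1_unit AAt.
by rewrite -[invmx A]mulmx1 -AAt mulmxA mulVmx // mul1mx.
Qed.

Lemma monic_size3E (F : nzRingType) (p : {poly F}) :
  p \is monic -> size p = 3%N -> p = 'X^2 + p`_1 *: 'X + (p`_0)%:P.
Proof.
move=> /monicP lead1 size3; apply/polyP => -[|[|[|i]]].
- by rewrite !coefD coefXn coefZ coefX coefC mulr0 !add0r.
- by rewrite !coefD coefXn coefZ coefX coefC mulr1 add0r addr0.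
- by rewrite !coefD coefXn coefZ coefX coefC mulr0 !addr0 -lead1 lead_coefE size3.
- by rewrite !coefD coefXn coefZ coefX coefC mulr0 !addr0 nth_default // size3.
Qed.

Lemma irredp_noroot (F : idomainType) (q : {poly F}) x :
  irreducible_poly q -> (2 < size q)%N -> ~~ root q x.
Proof.
move=> [_ q_irr] q_gt2; apply/negP; rewrite -dvdp_XsubCl => /q_irr.
by rewrite size_XsubC => /(_ isT) /eqp_size; rewrite size_XsubC => sq; rewrite -sq in q_gt2.
Qed.

Section RealFieldMatrix.
Variable R : realFieldType.

Lemma mulmx_tr_eq0 p q (Z : 'M[R]_(p, q)) : Z *m Z^T = 0 -> Z = 0.
Proof.
move=> ZZt0; apply/matrixP => i j; rewrite mxE.
have := congr1 (fun M : 'M_p => M i i) ZZt0; rewrite !mxE => /psumr_eq0P sq0.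
have : Z i j * Z^T j i = 0 by apply: sq0 => // k _; rewrite mxE -expr2 sqr_ge0.
by rewrite mxE => /eqP; rewrite mulf_eq0 orbb => /eqP.
Qed.

Lemma normal_mulmx_eq0 n p (N : 'M[R]_n) (X : 'M[R]_(n, p)) :
  N *m N^T = N^T *m N -> N *m (N *m X) = 0 -> N *m X = 0.
Proof.
move=> normN; set Y := N *m X => NY0.
have YtN0 : (Y^T *m N) *m (Y^T *m N)^T = 0.
  by rewrite [(Y^T *m N)^T]trmx_mul trmxK -mulmxA (mulmxA N) normN -!mulmxA NY0 !mulmx0.
have NtY0 : N^T *m Y = 0.
  by rewrite -[LHS]trmxK trmx_mul trmxK (mulmx_tr_eq0 YtN0) trmx0.
apply: trmx_inj; rewrite trmx0; apply: mulmx_tr_eq0.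
by rewrite trmxK [Y^T]trmx_mul -mulmxA NtY0 mulmx0.
Qed.

Lemma normal_nilpotent_eq0 n (N : 'M[R]_n.+1) k :
  N *m N^T = N^T *m N -> N ^+ k = 0 -> N = 0.
Proof.
move=> normN; case: k => [|k]; first by move/eqP; rewrite oner_eq0.
elim: k => [|k IHk]; first by rewrite expr1.
rewrite exprS => NNk0; apply: IHk; rewrite exprS.
by apply: normal_mulmx_eq0; rewrite // !mulmxE -!exprS.
Qed.

Lemma skew_mx11_eq0 (J : 'M[R]_1) : J^T = - J -> J = 0.
Proof.
move=> /matrixP/(_ 0 0); rewrite !mxE => J00.
by apply/matrixP => i j; rewrite !ord1 mxE; lra.
Qed.

Lemma mxminpoly_normal_irreducible_pow n (T : 'M[R]_n.+1) (q : {poly R}) k :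
  T *m T^T = T^T *m T -> irreducible_poly q -> mxminpoly T = q ^+ k ->
  mxminpoly T = q.
Proof.
move=> normT [q_gt1 _] minT; set N := horner_mx T q.
have TNt : comm_mx T N^T.
  have : comm_mx N T^T := comm_horner_mx q normT.
  by rewrite /comm_mx => /(congr1 trmx); rewrite !trmx_mul trmxK.
have normN : N *m N^T = N^T *m N := comm_horner_mx q TNt.
have qT0 : N = 0.
  by apply: (normal_nilpotent_eq0 (k := k) normN); rewrite -rmorphXn /= -minT mx_root_minpoly.
have q_neq0 : q != 0 by rewrite -size_poly_gt0 ltnW.
have size_minT : (size (mxminpoly T) <= size q)%N.
  exact: dvdp_leq q_neq0 (mxminpoly_min qT0).
have minT_gt1 : (1 < size (mxminpoly T))%N.
  by rewrite size_mxminpoly ltnS mxminpoly_nonconstant.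
have k1 : k = 1%N.
  have := size_exp q k; rewrite -minT.
  move: q_gt1 size_minT minT_gt1; set s := size q; set t := size (mxminpoly T).
  by nia.
by rewrite minT k1 expr1.
Qed.

Lemma orthogonal_conj_inv_iff n (T h J : 'M[R]_n) g s :
  s != 0 -> J^T = - J -> T = g%:M + s *: J ->
  T *m T^T = 1%:M -> h *m h^T = 1%:M ->
  h *m T *m invmx h = invmx T <-> h *m J *m h^T = - J.
Proof.
move=> s_neq0 skewJ defT TTt hht.
rewrite (orthogonal_invmx hht) (orthogonal_invmx TTt) {2}defT linearD linearZ /=.
rewrite skewJ tr_scalar_mx defT mulmxDr mulmxDl mul_mx_scalar -scalemxAl hht scalemx1.
rewrite -scalemxAr -scalemxAl; split; last by move->.
by move/addrI/(scalerI s_neq0).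
Qed.

Lemma orthogonal_root_quadratic n (T : 'M[R]_n.+1) b c :
  T *m T^T = 1%:M -> horner_mx T ('X^2 + b *: 'X + c%:P) = 0 ->
  T + b%:M + c *: T^T = 0.
Proof.
move=> TTt /(congr1 (mulmx^~ T^T)); rewrite /= mul0mx => <-.
rewrite -mul_polyC !rmorphD rmorphXn rmorphM /= !horner_mx_C horner_mx_X -!mulmxE.
by rewrite !mulmxDl -mulmxA TTt mulmx1 mul_scalar_mx -scalemxAl TTt scalemx1 mul_scalar_mx.
Qed.

Lemma orthogonal_irreducible_mxminpoly_coef0 n (T : 'M[R]_n.+1) :
  T *m T^T = 1%:M -> size (mxminpoly T) = 3%N -> irreducible_poly (mxminpoly T) ->
  (mxminpoly T)`_0 = 1.
Proof.
move=> TTt p3 p_irr; set p := mxminpoly T; set b := p`_1; set c := p`_0.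
have pT : horner_mx T ('X^2 + b *: 'X + c%:P) = 0.
  by rewrite -monic_size3E ?mxminpoly_monic ?mx_root_minpoly.
have E1 := orthogonal_root_quadratic TTt pT.
have E2 : T^T + b%:M + c *: T = 0.
  by move: (congr1 trmx E1); rewrite !linearD !linearZ /= tr_scalar_mx trmxK trmx0.
apply/eqP; apply: contraT => c_neq1.
have symT : T^T = T.
  have : (1 - c) *: (T - T^T) = 0.
    transitivity ((T + b%:M + c *: T^T) - (T^T + b%:M + c *: T)).
      by apply/matrixP => i j; rewrite !mxE; ring.
    by rewrite E1 E2 subrr.
  by move/eqP; rewrite scaler_eq0 subr_eq0 eq_sym (negbTE c_neq1) subr_eq0 => /eqP.
have /mxminpoly_min p_dvd : horner_mx T ('X^2 - 1%:P) = 0.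
  by rewrite rmorphB rmorphXn /= horner_mx_X horner_mx_C expr2 -mulmxE -{2}symT TTt subrr.
have := dvdp_size_eqp p_dvd; rewrite size_XnsubC // p3 eqxx => /esym p_eqp.
have := irredp_noroot 1 p_irr; rewrite p3 (eqp_root p_eqp) => /(_ isT).
by rewrite rootE !hornerE expr1n subrr eqxx.
Qed.

End RealFieldMatrix.

Section RealClosedFieldMatrix.
Variable R : rcfType.

Lemma unit_row_in_kermx N p (B : 'M[R]_(N, p)) :
  (p < N)%N -> exists y : 'rV[R]_N, y *m y^T = 1%:M /\ y *m B = 0.
Proof.
move=> p_lt_N.
have ker_neq0 : kermx B != 0.
  rewrite -mxrank_eq0 mxrank_ker subn_eq0 -ltnNge.
  by apply: leq_ltn_trans p_lt_N; rewrite rank_leq_col.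
set x := nz_row (kermx B).
have x_neq0 : x != 0 by rewrite nz_row_eq0.
have xB0 : x *m B = 0.
  by have /submxP [w xE] := nz_row_sub (kermx B); rewrite /x xE -mulmxA mulmx_ker mulmx0.
set r := (x *m x^T) 0 0.
have r_gt0 : 0 < r.
  rewrite lt_def; apply/andP; split.
    apply: contra x_neq0 => /eqP r0; apply/eqP/mulmx_tr_eq0.
    by apply/matrixP => i j; rewrite !ord1 [RHS]mxE.
  by rewrite /r mxE sumr_ge0 // => j _; rewrite mxE -expr2 sqr_ge0.
exists ((Num.sqrt r)^-1 *: x); split; last by rewrite -scalemxAl xB0 scaler0.
rewrite linearZ /= -scalemxAl -scalemxAr scalerA (mx11_scalar (x *m x^T)) -/r.
by rewrite scale_scalar_mx -invfM -expr2 sqr_sqrtr ?ltW ?mulVf ?gt_eqF.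
Qed.

Lemma skew_isotropic_orthonormal_rows N (J : 'M[R]_N) k :
  J^T = - J -> (k + k <= N)%N ->
  exists U : 'M[R]_(k, N), U *m U^T = 1%:M /\ U *m J *m U^T = 0.
Proof.
move=> skewJ; elim: k => [|k IHk] k_le.
  by exists 0; split; apply/matrixP => -[].
have k2_lt : (k + k < N)%N by lia.
have [U [UUt UJUt]] := IHk (ltnW k2_lt).
have [y [yyt /eqP]] := unit_row_in_kermx (col_mx U (U *m J))^T k2_lt.
rewrite tr_col_mx mul_mx_row row_mx_eq0 => /andP[/eqP yUt /eqP yUJt].
have JtE p q (X : 'M[R]_(p, N)) (Y : 'M[R]_(q, N)) : X *m (Y *m J)^T = - (X *m J *m Y^T).
  by rewrite trmx_mul skewJ mulNmx mulmxN mulmxA.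
have yJyt : y *m J *m y^T = 0.
  by apply: skew_mx11_eq0; rewrite !trmx_mul trmxK skewJ mulNmx mulmxN mulmxA.
have Uyt : U *m y^T = 0 by apply: trmx_inj; rewrite trmx_mul trmxK yUt trmx0.
have UJyt : U *m J *m y^T = 0.
  by apply: trmx_inj; rewrite trmx_mul trmxK yUJt trmx0.
have yJUt : y *m J *m U^T = 0 by apply/eqP; rewrite -oppr_eq0 -JtE yUJt.
have orthoyU : col_mx y U *m (col_mx y U)^T = 1%:M.
  by rewrite tr_col_mx mul_col_row yyt yUt Uyt UUt -scalar_mx_block.
have isoyU : col_mx y U *m J *m (col_mx y U)^T = 0.
  by rewrite tr_col_mx mul_col_mx mul_col_row yJyt yJUt UJyt UJUt block_mx0.
by exists (col_mx y U).
Qed.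

Lemma det_cplx_block_ge0 m (a b : 'M[R]_m) : 0 <= \det (block_mx a b (- b) a).
Proof.
rewrite -(@lecR R) -(det_map_mx (real_complex R)) map_block_mx map_mxN.
set A := map_mx _ a; set B := map_mx _ b.
pose L (z : R[i]) : 'M[R[i]]_(m + m) := block_mx 1%:M 0 z%:M 1%:M.
have detL z : \det (L z) = 1 by rewrite det_lblock !det1 mulr1.
have triangular : L 'i *m block_mx A B (- B) A *m L (- 'i) =
    block_mx (A - 'i *: B) B 0 (A + 'i *: B).
  rewrite /L !mulmx_block !mul1mx !mul0mx !mulmx0 !mulmx1 !add0r !addr0.
  rewrite !mul_scalar_mx !mul_mx_scalar; congr block_mx; [by rewrite scaleNr| |exact: addrC].
  by rewrite scaleNr scalerDr scalerA -expr2 sqr_i scaleN1r opprD opprK addrC addrA addrNK subrr.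
have conjB : A + 'i *: B = map_mx conjc (A - 'i *: B).
  by apply/matrixP => i j; rewrite !mxE; simpc; rewrite /= opprK.
have := congr1 determinant triangular.
rewrite !det_mulmx !detL mul1r mulr1 det_ublock conjB det_map_mx => ->.
by rewrite (rmorph0 (real_complex R)) mul_conjC_ge0.
Qed.

(* Reading a row (x, y) of R^(m + m) as x + i y in C^m, right multiplication by
   cplx_i_mx is multiplication by i and by cplx_conj_mx complex conjugation. *)
Definition cplx_i_mx m : 'M[R]_(m + m) := block_mx 0 1%:M (- 1%:M) 0.

Definition cplx_conj_mx m : 'M[R]_(m + m) := block_mx 1%:M 0 0 (- 1%:M).

Lemma commute_cplx_i_det_ge0 m (c : 'M[R]_(m + m)) :
  c *m cplx_i_mx m = cplx_i_mx m *m c -> 0 <= \det c.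
Proof.
rewrite -[c]submxK /cplx_i_mx !mulmx_block.
rewrite !mulmxN !mulNmx !mulmx0 !mul0mx !mulmx1 !mul1mx !addr0 !add0r.
by case/eq_block_mx => <- <- _ _; apply: det_cplx_block_ge0.
Qed.

Lemma cplx_conj_mxK m : cplx_conj_mx m *m cplx_conj_mx m = 1%:M.
Proof.
rewrite /cplx_conj_mx mulmx_block !mulmx0 !mul0mx !mulmx1 mulmxN mulmx1 opprK.
by rewrite !addr0 !add0r -scalar_mx_block.
Qed.

Lemma tr_cplx_conj_mx m : (cplx_conj_mx m)^T = cplx_conj_mx m.
Proof. by rewrite /cplx_conj_mx tr_block_mx !trmx0 linearN /= !tr_scalar_mx. Qed.

Lemma det_cplx_conj_mx m : \det (cplx_conj_mx m) = (-1) ^+ m.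
Proof. by rewrite det_lblock det1 mul1r -scaleN1r detZ det1 mulr1. Qed.

Lemma cplx_conj_i_mx m :
  cplx_conj_mx m *m cplx_i_mx m = - (cplx_i_mx m *m cplx_conj_mx m).
Proof.
rewrite /cplx_conj_mx /cplx_i_mx !mulmx_block.
rewrite !mulmx0 !mul0mx !mulmx1 !mul1mx !mulmxN !mulNmx !mulmx1 !addr0 !add0r.
by rewrite opp_block_mx !oppr0 opprK.
Qed.

Definition opp_conj_in_SO n (J : 'M[R]_n) : Prop :=
  exists h : 'M[R]_n, [/\ h *m h^T = 1%:M, \det h = 1 & h *m J *m h^T = - J].

Lemma opp_conj_in_SO_cplx_i m : opp_conj_in_SO (cplx_i_mx m) <-> ~~ odd m.
Proof.
split.
  move=> [h [hht deth hJht]].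
  have hJ : h *m cplx_i_mx m = - (cplx_i_mx m *m h).
    by rewrite -[LHS]mulmx1 -(mulmx1C hht) !mulmxA hJht mulNmx.
  have /commute_cplx_i_det_ge0 :
      h *m cplx_conj_mx m *m cplx_i_mx m = cplx_i_mx m *m (h *m cplx_conj_mx m).
    by rewrite -mulmxA cplx_conj_i_mx mulmxN !mulmxA hJ mulNmx opprK.
  rewrite det_mulmx deth mul1r det_cplx_conj_mx -signr_odd.
  by case: (odd m); rewrite ?expr1 ?ler0N1.
move=> m_even; exists (cplx_conj_mx m); split.
- by rewrite tr_cplx_conj_mx cplx_conj_mxK.
- by rewrite det_cplx_conj_mx -signr_odd (negbTE m_even).
- by rewrite tr_cplx_conj_mx cplx_conj_i_mx mulNmx -mulmxA cplx_conj_mxK mulmx1.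
Qed.

Lemma opp_conj_in_SO_orthogonal_conj n (P J : 'M[R]_n) :
  P *m P^T = 1%:M -> opp_conj_in_SO J -> opp_conj_in_SO (P *m J *m P^T).
Proof.
move=> PPt [h [hht deth hJht]]; have PtP := mulmx1C PPt.
have cancel p (X : 'M[R]_(p, n)) : X *m P^T *m P = X by rewrite -mulmxA PtP mulmx1.
exists (P *m h *m P^T); split.
- by rewrite !trmx_mul trmxK !mulmxA cancel -(mulmxA _ h) hht mulmx1.
- by rewrite !det_mulmx deth mulr1 -det_mulmx PPt det1.
- by rewrite !trmx_mul trmxK !mulmxA !cancel -mulNmx -mulmxN -hJht !mulmxA.
Qed.

Lemma complex_structure_normal_form m (J : 'M[R]_(m + m)) :
  J^T = - J -> J *m J = - 1%:M ->
  exists2 P : 'M[R]_(m + m), P *m P^T = 1%:M & P *m J *m P^T = cplx_i_mx m.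
Proof.
move=> skewJ JJ; have [U [UUt UJUt]] := skew_isotropic_orthonormal_rows skewJ (leqnn _).
have JJt : J *m J^T = 1%:M by rewrite skewJ mulmxN JJ opprK.
have UJJ : U *m J *m J = - U by rewrite -mulmxA JJ mulmxN mulmx1.
have UJUJt : U *m J *m (U *m J)^T = 1%:M by rewrite trmx_mul mulmxA -(mulmxA U) JJt mulmx1.
have UUJt : U *m (U *m J)^T = 0 by rewrite trmx_mul skewJ mulNmx mulmxN mulmxA UJUt oppr0.
exists (col_mx U (U *m J)).
  by rewrite tr_col_mx mul_col_row UUt UUJt UJUt UJUJt -scalar_mx_block.
by rewrite mul_col_mx UJJ tr_col_mx mul_col_row UJUt UJUJt !mulNmx UUt UUJt oppr0.
Qed.

Lemma opp_conj_in_SO_complex_structure N (J : 'M[R]_N) :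
  ~~ odd N -> J^T = - J -> J *m J = - 1%:M ->
  opp_conj_in_SO J <-> (N %% 4 != 2)%N.
Proof.
move=> N_even; have [m defN] : exists m, N = (m + m)%N.
  by exists N./2; rewrite addnn -[LHS]odd_double_half (negbTE N_even).
subst N => skewJ JJ; have [P PPt PJPt] := complex_structure_normal_form skewJ JJ.
have -> : ((m + m) %% 4 != 2)%N = ~~ odd m.
  have -> : ((m + m) %% 4 = 2 * (m %% 2))%N by lia.
  by rewrite modn2; case: (odd m).
rewrite -opp_conj_in_SO_cplx_i -PJPt; split; first exact: opp_conj_in_SO_orthogonal_conj.
have PtP := mulmx1C PPt.
move=> /(opp_conj_in_SO_orthogonal_conj (P := P^T)); rewrite trmxK => /(_ PtP).
by rewrite !mulmxA PtP mul1mx -mulmxA PtP mulmx1.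
Qed.

Lemma orthogonal_complex_structure_decomposition n (T : 'M[R]_n) g :
  T *m T^T = 1%:M -> T + T^T = (g *+ 2)%:M -> g ^+ 2 < 1 ->
  exists s (J : 'M[R]_n),
    [/\ 0 < s, J^T = - J, J *m J = - 1%:M & T = g%:M + s *: J].
Proof.
move=> TTt trT g2_lt1; set K := T - g%:M.
have Tt : T^T = (g *+ 2)%:M - T by rewrite -trT addrAC subrr add0r.
have skewK : K^T = - K.
  by rewrite /K linearB /= tr_scalar_mx Tt opprB raddfMn /= mulr2n addrAC addrK.
have TT : T *m T = (g *+ 2) *: T - 1%:M.
  apply/eqP; rewrite eq_sym subr_eq -TTt Tt mulmxBr mul_mx_scalar.
  by rewrite addrC subrK.
have KK : K *m K = (g ^+ 2 - 1)%:M.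
  rewrite /K mulmxBl !mulmxBr TT mul_mx_scalar mul_scalar_mx -scalar_mxM.
  by apply/matrixP => i j; rewrite !mxE; ring.
set s := Num.sqrt (1 - g ^+ 2).
have s_gt0 : 0 < s by rewrite sqrtr_gt0 subr_gt0.
have s2 : s ^+ 2 = 1 - g ^+ 2 by rewrite sqr_sqrtr // subr_ge0 ltW.
exists s, (s^-1 *: K); split => //.
- by rewrite linearZ /= skewK scalerN.
- rewrite -scalemxAl -scalemxAr scalerA KK scale_scalar_mx -raddfN /=.
  by congr scalar_mx; rewrite -invfM -expr2 s2 -[g ^+ 2 - 1]opprB mulrN mulVf // gt_eqF // subr_gt0.
- by rewrite scalerA mulfV ?gt_eqF // scale1r /K addrC subrK.
Qed.

Lemma orthogonal_irreducible_mxminpoly_trace n (T : 'M[R]_n.+1) :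
  T *m T^T = 1%:M -> size (mxminpoly T) = 3%N -> irreducible_poly (mxminpoly T) ->
  exists2 g, g ^+ 2 < 1 & T + T^T = (g *+ 2)%:M.
Proof.
move=> TTt p3 p_irr; set b := (mxminpoly T)`_1.
have c1 := orthogonal_irreducible_mxminpoly_coef0 TTt p3 p_irr.
have disc : b ^+ 2 - 4 * (mxminpoly T)`_0 < 0.
  apply/(Pdeg2.RealMonic.deg2_poly_noroot p3 (mxminpoly_monic T)) => x.
  by apply: irredp_noroot; rewrite ?p3.
have pT : horner_mx T ('X^2 + b *: 'X + 1%:P) = 0.
  by rewrite -c1 -monic_size3E ?mxminpoly_monic ?mx_root_minpoly.
have := orthogonal_root_quadratic TTt pT; rewrite scale1r addrAC => /eqP.
rewrite addr_eq0 => /eqP ->; exists (- b / 2); last first.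
  by rewrite -raddfN /= -mulr_natr divfK // pnatr_eq0.
by move: disc; rewrite c1 expr_div_n sqrrN ltr_pdivrMr ?exprn_gt0 //; lra.
Qed.

End RealClosedFieldMatrix.

Theorem lemma3p3 (R : realType) (n' : nat) (T : 'M[R]_n'.+1) :
  ~~ odd n'.+1 ->
  in_SO T ->
  (exists (q : {poly R}) (k : nat),
      size q = 3%N /\ irreducible_poly q /\ mxminpoly T = q ^+ k) ->
  (real_in_SO T <-> (n'.+1 %% 4 != 2)%N).
Proof.
move=> n_even [TTt _] [q [k [q3 [q_irr minT]]]].
have normT : T *m T^T = T^T *m T by rewrite TTt (mulmx1C TTt).
have minTq := mxminpoly_normal_irreducible_pow normT q_irr minT.
rewrite -minTq in q3 q_irr.
have [g g2_lt1 trT] := orthogonal_irreducible_mxminpoly_trace TTt q3 q_irr.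
have [s [J [s_gt0 skewJ JJ defT]]] :=
  orthogonal_complex_structure_decomposition TTt trT g2_lt1.
have conjE (h : 'M[R]_n'.+1) :=
  orthogonal_conj_inv_iff (h := h) (lt0r_neq0 s_gt0) skewJ defT TTt.
apply: iff_trans (opp_conj_in_SO_complex_structure n_even skewJ JJ).
split=> [[h [[hht deth] hT]] | [h [hht deth hJ]]]; exists h.
  by split => //; apply/conjE.
by split => //; apply/conjE.
Qed.
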